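(* Call a nonnegative integer $t$ totally balanced if its binary expansion (with the convention that $0$ has the empty expansion) has even length $2k$ for some $k \geq 0$, contains exactly $k$ ones and $k$ zeros, and, reading from the most significant bit, every prefix contains no more zeros than ones. For a nonnegative integer $t = \sum_{j \geq 0} e_j 2^j$ with $e_j \in \{0,1\}$, let $v_t = \sum_{j \geq 0} e_j 2^{-j-1}$ (the base-2 van der Corput value). Write each $v_t$, for $t$ totally balanced, as a fraction in lowest terms. Then every such denominator is a power of $4$, and for each $k \geq 0$ the denominator $4^k$ occurs for exactly $$C_k = \frac{1}{k+1}\binom{2k}{k}$$ totally balanced integers $t$ (namely those whose binary expansion has length $2k$).
   Context: $C_k$ denotes the $k$-th Catalan number. *)

From mathcomp Require Import all_boot all_order all_algebra.
Set Implicit Arguments. Unset Strict Implicit. Unset Printing Implicit Defensive.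
Import Order.TTheory GRing.Theory Num.Theory.

Definition binlen (n : nat) : nat := if n == 0%N then 0%N else (trunc_log 2 n).+1.

Definition bit (n j : nat) : bool := odd (n %/ 2 ^ j).

Definition binexp (n : nat) : seq bool :=
  [seq bit n (binlen n - 1 - i) | i <- iota 0 (binlen n)].

Definition totally_balanced (t : nat) : Prop :=
  exists k : nat,
    [/\ size (binexp t) = k.*2,
        count id (binexp t) = k,
        count negb (binexp t) = k &
        forall i : nat, count negb (take i (binexp t)) <= count id (take i (binexp t))].

Definition vdc (t : nat) : rat :=
  (\sum_(j < binlen t) (bit t j)%:R / (2 ^ j.+1)%N%:R)%R.

Definition catalan (k : nat) : nat := 'C(k.*2, k) %/ k.+1.

From mathcomp Require Import all_boot all_order all_algebra.
From mathcomp Require Import zify ring.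
Import Order.TTheory GRing.Theory Num.Theory.

Set Implicit Arguments.
Unset Strict Implicit.
Unset Printing Implicit Defensive.

(* The van der Corput value of t > 0 is an odd integer over 2 ^ binlen t, so
   its reduced denominator is 2 ^ binlen t; for totally balanced t this is 4 ^ k
   with 2k the length of the expansion.  The expansions of length 2k are exactly
   the ballot words with k ones and k zeros.  Sorting ballot words by their last
   letter shows that C(a+b+1, b+1) - C(a+b+1, b) of them have a ones and
   b + 1 <= a + 1 zeros; for a = b + 1 = k this is the Catalan number C_k. *)

Definition ballot (s : seq bool) : Prop :=
  forall i : nat, count negb (take i s) <= count id (take i s).

Lemma take_rcons (T : Type) (s : seq T) x i :
  take i (rcons s x) = if i <= size s then take i s else rcons s x.
Proof.
rewrite -cats1 take_cat; case: ltngtP => [lt_i|gt_i|->].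
- by [].
- by rewrite take_oversize // subn_gt0.
- by rewrite subnn take0 cats0 take_size.
Qed.

Lemma ballot_rcons s x :
  ballot (rcons s x) <->
  ballot s /\ count negb (rcons s x) <= count id (rcons s x).
Proof.
split=> [bal_sx | [bal_s last_ok] i]; last first.
  by rewrite take_rcons; case: ifP.
split; last by have := bal_sx (size s).+1; rewrite take_rcons ltnn.
move=> i; case: (leqP i (size s)) => [le_is|lt_si].
  by have := bal_sx i; rewrite take_rcons le_is.
rewrite take_oversize; last exact: ltnW.
by have := bal_sx (size s); rewrite take_rcons leqnn take_size.
Qed.

Lemma ballot_nseq_true a : ballot (nseq a true).
Proof.
move=> i; suff -> : count negb (take i (nseq a true)) = 0 by [].
by elim: a i => [|a IH] [|i] //=; apply: IH.
Qed.

Lemma ballot_head s : ballot s -> head true s.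
Proof. by rewrite /ballot; case: s => [|[] s] // /(_ 1) /=; rewrite take0. Qed.

Lemma count_rcons (T : Type) (p : pred T) s x :
  count p (rcons s x) = count p s + p x.
Proof. by rewrite -cats1 count_cat /= addn0. Qed.

Lemma count_negb0_nseq s : count negb s = 0 -> s = nseq (count id s) true.
Proof. by elim: s => [|[] s IH] //= /IH {1}->. Qed.

Fixpoint ballot_words (a : nat) : nat -> seq (seq bool) :=
  fix ballot_words_a b :=
    if b is b'.+1 then
      if b <= a then
        (if a is a'.+1 then [seq rcons w true | w <- ballot_words a' b] else [::])
        ++ [seq rcons w false | w <- ballot_words_a b']
      else [::]
    else [:: nseq a true].

Lemma ballot_words0 a : ballot_words a 0 = [:: nseq a true].
Proof. by case: a. Qed.

Lemma ballot_wordsS a b :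
  ballot_words a.+1 b.+1 =
  if b <= a then [seq rcons w true | w <- ballot_words a b.+1]
                 ++ [seq rcons w false | w <- ballot_words a.+1 b]
  else [::].
Proof. by []. Qed.

Lemma ballot_words_spec a b s :
  s \in ballot_words a b -> [/\ count id s = a, count negb s = b & ballot s].
Proof.
have nseq_spec n : [/\ count id (nseq n true) = n, count negb (nseq n true) = 0
                     & ballot (nseq n true)].
  by rewrite !count_nseq mul1n mul0n; split; last exact: ballot_nseq_true.
have extend w x : ballot w -> count negb w + ~~ x <= count id w + x ->
    ballot (rcons w x).
  by move=> bal_w last_ok; apply/ballot_rcons; rewrite !count_rcons.
elim: a b s => [|a IHa] b s.
  by case: b => [|b] //; rewrite ballot_words0 inE => /eqP->.
elim: b s => [|b IHb] s; first by rewrite ballot_words0 inE => /eqP->.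
rewrite ballot_wordsS; case: ifP => // le_ba.
rewrite mem_cat => /orP[] /mapP[w w_in ->];
  [have := IHa _ _ w_in | have := IHb _ w_in] => -[cid cneg bal];
  rewrite !count_rcons cid cneg; split; rewrite ?addn0 ?addn1 //;
  by apply: extend => //=; lia.
Qed.

Lemma ballot_words_complete a b s :
  count id s = a -> count negb s = b -> ballot s -> s \in ballot_words a b.
Proof.
elim/last_ind: s a b => [|s x IH] a b; first by move=> <- <-.
move=> cid cneg /ballot_rcons[bal_s last_ok].
case: b cneg => [|b] cneg.
  by rewrite ballot_words0 inE -cid -(count_negb0_nseq cneg).
case: a cid => [|a] cid; first by move: last_ok; rewrite cid cneg.
move: last_ok cid cneg; rewrite ballot_wordsS !count_rcons => last_ok cid cneg.
rewrite ifT; last by lia.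
rewrite mem_cat; case: x last_ok cid cneg; rewrite ?addn0 ?addn1 => last_ok cid cneg.
  by apply/orP; left; apply: map_f; apply: IH => //; lia.
by apply/orP; right; apply: map_f; apply: IH => //; lia.
Qed.

Lemma mem_ballot_words a b s :
  s \in ballot_words a b <-> [/\ count id s = a, count negb s = b & ballot s].
Proof.
by split=> [/ballot_words_spec | [cid cneg bal]]; last exact: ballot_words_complete.
Qed.

Lemma uniq_ballot_words a b : uniq (ballot_words a b).
Proof.
elim: a b => [|a IHa] b; first by case: b.
elim: b => [|b IHb]; first by rewrite ballot_words0.
rewrite ballot_wordsS; case: ifP => // _.
rewrite cat_uniq !(map_inj_uniq (rcons_injl _)) IHa IHb andbT /=.
apply/hasPn => _ /mapP[w _ ->]; apply/mapP => -[w' _ /(congr1 (last true))].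
by rewrite !last_rcons.
Qed.

Lemma size_ballot_words a b : b <= a ->
  size (ballot_words a b.+1) + 'C(a + b.+1, b) = 'C(a + b.+1, b.+1).
Proof.
elim: a b => [|a IHa] b; first by case: b.
elim: b => [|b IHb] le_ba; rewrite ballot_wordsS.
  have := IHa 0 (leq0n a).
  by rewrite size_cat !size_map ballot_words0 !bin0 !bin1 /=; lia.
case: ifP => [le_b1a | /negbT]; last first.
  rewrite -ltnNge ltnS => le_ab; have -> : b = a by lia.
  by rewrite -bin_sub; [congr binomial | ]; lia.
have := IHa _ le_b1a; have := IHb (ltnW le_ba).
have := binS (a + b).+2 b; have := binS (a + b).+2 b.+1.
rewrite size_cat !size_map !addSn !addnS; lia.
Qed.

Lemma size_ballot_words_diag k : size (ballot_words k k) = catalan k.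
Proof.
case: k => [|k] //; rewrite /catalan -addnn.
have := size_ballot_words (leqnSn k); have := mul_bin_left (k.+1 + k.+1) k.
have -> : k.+1 + k.+1 - k = k.+2 by lia.
set C1 := 'C(_, k.+1); set C0 := 'C(_, k); set S := size _ => mul_C1 size_S.
have -> : C1 = S * k.+2 by nia.
by rewrite mulnK.
Qed.

Lemma binlen_half n : 0 < n -> binlen n = (binlen n./2).+1.
Proof. by case: n => [|[|n]] //= _; rewrite /binlen trunc_log2S. Qed.

Lemma size_binexp t : size (binexp t) = binlen t.
Proof. by rewrite size_map size_iota. Qed.

Lemma bit_half n j : bit n j.+1 = bit n./2 j.
Proof. by rewrite /bit expnS divnMA divn2. Qed.

Lemma binexp_half n : 0 < n -> binexp n = rcons (binexp n./2) (odd n).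
Proof.
move=> n_gt0; rewrite /binexp binlen_half // -addn1 iotaD map_cat cats1 add0n.
congr rcons; last by rewrite addn1 subSS subn0 subnn /bit divn1.
apply/eq_in_map => i; rewrite mem_iota add0n => /andP[_ lt_i].
by rewrite -bit_half; congr bit; lia.
Qed.

Definition binval (w : seq bool) : nat := foldl (fun n (x : bool) => n.*2 + x) 0 w.

Lemma binval_rcons w x : binval (rcons w x) = (binval w).*2 + x.
Proof. by rewrite /binval foldl_rcons. Qed.

Lemma binexpK : cancel binexp binval.
Proof.
elim/ltn_ind=> [[|n] IH] //; rewrite binexp_half // binval_rcons IH.
  by rewrite addnC odd_double_half.
by rewrite ltn_half_double; lia.
Qed.

Lemma binvalK w : head true w -> binexp (binval w) = w.
Proof.
elim/last_ind: w => [//|w x IH]; case: w IH => [_ /= -> //|y w IH].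
move=> /= y_true; have Ew := IH y_true.
have val_gt0 : 0 < binval (y :: w) by case: (binval _) Ew.
rewrite -rcons_cons binval_rcons binexp_half; last by rewrite addn_gt0 double_gt0 val_gt0.
by rewrite addnC half_bit_double Ew oddD odd_double /=; case: x.
Qed.

Local Open Scope ring_scope.

Lemma vdc0 : vdc 0 = 0.
Proof. by rewrite /vdc big_ord0. Qed.

Lemma vdc_half t : (0 < t)%N -> vdc t = ((odd t)%:R + vdc t./2) / 2.
Proof.
move=> t_gt0; rewrite /vdc binlen_half // big_ord_recl /= /bit expn0 divn1 expn1.
rewrite mulrDl mulr_suml; congr (_ + _); apply: eq_bigr => i _.
rewrite -/(bit t (bump 0 i)) bit_half /bit (expnS 2 i.+1) natrM; field.
by rewrite pnatr_eq0 expn_eq0.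
Qed.

Lemma vdc_odd_fraction t : (0 < t)%N ->
  exists2 N : nat, odd N & vdc t = N%:R / (2 ^ binlen t)%N%:R.
Proof.
elim/ltn_ind: t => t IH t_gt0; rewrite vdc_half // binlen_half //.
have [half0|half_gt0] := posnP t./2.
  have -> : t = 1%N by case: t t_gt0 half0 {IH} => [|[|[|t]]].
  by exists 1%N; rewrite // vdc0 addr0.
have [|N odd_N ->] := IH t./2 _ half_gt0.
  by rewrite ltn_half_double; lia.
exists (odd t * 2 ^ binlen t./2 + N)%N.
  by rewrite oddD oddM oddX binlen_half // andbF.
rewrite natrD natrM expnS natrM; field.
by rewrite pnatr_eq0 expn_eq0.
Qed.

Lemma denq_vdc t : denq (vdc t) = (2 ^ binlen t)%N%:Z.
Proof.
have [->|t_gt0] := posnP t; first by rewrite vdc0.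
have [N odd_N ->] := vdc_odd_fraction t_gt0.
have := @coprimeq_den N%:Z (2 ^ binlen t)%N%:Z.
rewrite !pmulrn /= => ->; last by rewrite coprimeXr // coprimen2.
by rewrite eqz_nat expn_eq0.
Qed.

Lemma denq_vdc_pow4 t k :
  denq (vdc t) = (4 ^ k)%N%:Z <-> size (binexp t) = k.*2.
Proof.
have -> : (4 ^ k = 2 ^ k.*2)%N by rewrite -mul2n expnM.
rewrite denq_vdc size_binexp; split=> [/eqP | -> //].
by rewrite eqz_nat eqn_exp2l // => /eqP.
Qed.

Lemma totally_balanced_ballot_words t k :
  totally_balanced t /\ size (binexp t) = k.*2 <-> binexp t \in ballot_words k k.
Proof.
have size_count (s : seq bool) : size s = (count id s + count negb s)%N.
  exact: esym (count_predC id s).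
rewrite mem_ballot_words; split=> [[[k' [size_k' cid cneg bal]] size_k] | [cid cneg bal]].
  by have /double_inj <- : k'.*2 = k.*2 by rewrite -size_k'.
by split; [exists k; split|]; rewrite // size_count cid cneg addnn.
Qed.

Lemma mem_binval_ballot_words a b t :
  (t \in [seq binval w | w <- ballot_words a b]) = (binexp t \in ballot_words a b).
Proof.
apply/mapP/idP => [[w w_in ->] | t_in]; last by exists (binexp t); rewrite ?binexpK.
by have [_ _ /ballot_head/binvalK->] := ballot_words_spec w_in.
Qed.

Theorem proposition1 :
  (forall t : nat, totally_balanced t ->
     exists k : nat, denq (vdc t) = ((4 ^ k)%N)%:Z) /\
  (forall k : nat,
     exists s : seq nat,
       [/\ uniq s,
           size s = catalan k,
           (forall t : nat, t \in s <->
              (totally_balanced t /\ denq (vdc t) = ((4 ^ k)%N)%:Z)) &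
           (forall t : nat, totally_balanced t ->
              (denq (vdc t) = ((4 ^ k)%N)%:Z <-> size (binexp t) = k.*2))]).
Proof.
split=> [t [k [size_k _ _ _]] | k]; first by exists k; apply/denq_vdc_pow4.
exists [seq binval w | w <- ballot_words k k]; split.
- rewrite map_inj_in_uniq ?uniq_ballot_words //.
  apply: (can_in_inj (g := binexp)) => w /ballot_words_spec[_ _ /ballot_head].
  exact: binvalK.
- by rewrite size_map size_ballot_words_diag.
- by move=> t; rewrite denq_vdc_pow4 totally_balanced_ballot_words mem_binval_ballot_words.
- by move=> t _; apply: denq_vdc_pow4.
Qed.
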